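(* For every $\alpha\in(0,1)$ and $\delta>0$, $$L(\alpha;\delta)>\frac4\delta\Big(1-\frac{\pi^2}{16}-\frac12\alpha^2\Big).$$
   Context: For $s\ge0$ let $\phi_1(s)=\int_0^{\pi/2}\frac{\sin^2\theta}{(\sin^2\theta+s^2)^{1/2}}d\theta$ (strictly decreasing from $1$ to $0$, inverse $\phi_1^{-1}:(0,1]\to[0,\infty)$) and $\phi_2(s)=\int_0^{\pi/2}\frac{2\sin^2\theta+s^2}{(\sin^2\theta+s^2)^{1/2}}d\theta$. For $\alpha\in(0,1)$, $\delta>0$: $L(\alpha;\delta)=\frac4\delta\Big(1-\frac{\phi_2^2(\phi_1^{-1}(\alpha))}{4[1+(\phi_1^{-1}(\alpha))^2]}\Big)$. *)

From Stdlib Require Import Reals Lra ClassicalEpsilon.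
Open Scope R_scope.

(* Riemann integral of f over [a,b]: the common value of RiemannInt pr for
   any integrability proof pr (RiemannInt is proof-independent); chosen by
   Hilbert's epsilon (only meaningful when f is Riemann integrable). *)
Definition RInt (f : R -> R) (a b : R) : R :=
  epsilon (inhabits 0)
    (fun I => exists pr : Riemann_integrable f a b, RiemannInt pr = I).

Definition phi1 (s : R) : R :=
  RInt (fun t => (sin t) ^ 2 / sqrt ((sin t) ^ 2 + s ^ 2)) 0 (PI / 2).

Definition phi2 (s : R) : R :=
  RInt (fun t => (2 * (sin t) ^ 2 + s ^ 2) / sqrt ((sin t) ^ 2 + s ^ 2)) 0 (PI / 2).

(* phi_1^{-1}(a): the (unique, phi_1 being strictly decreasing) s >= 0 with
   phi_1(s) = a. *)
Definition phi1_inv (a : R) : R :=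
  epsilon (inhabits 0) (fun s => 0 <= s /\ phi1 s = a).

Definition L (alpha delta : R) : R :=
  let s := phi1_inv alpha in
  4 / delta * (1 - (phi2 s) ^ 2 / (4 * (1 + s ^ 2))).

From Pilot Require Import Defs.
From Stdlib Require Import Reals Lra ClassicalEpsilon.
From Coquelicot Require Import Coquelicot.
Open Scope R_scope.

(* phi1 is (pi/2)-Lipschitz with phi1(0) = 1 and phi1(S) <= pi/(2S), so by the
   intermediate value theorem s = phi1^{-1}(alpha) is a genuine root, and s > 0.
   Then phi2(s) = alpha + J with J the integral of sqrt(sin^2 t + s^2).  Bounding
   sqrt u by its tangent line at the mean c^2 = 1/2 + s^2 of sin^2 t + s^2 gives
   J < c pi/2, strictly since sin^2 t is not constant.  With k = 1 + 2 s^2,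
   Cauchy-Schwarz gives k (alpha + J)^2 <= (1 + k)(k alpha^2 + J^2), and combining
   the two bounds yields phi2(s)^2 < 4 (1 + s^2)(pi^2/16 + alpha^2/2). *)

Lemma Defs_RInt_eq_RInt (f : R -> R) (a b : R) :
  ex_RInt f a b -> Defs.RInt f a b = RInt f a b.
Proof.
  intros Hf. unfold Defs.RInt.
  pose proof (ex_RInt_Reals_0 _ _ _ Hf) as pr.
  destruct (epsilon_spec (inhabits 0)
    (fun I => exists pr : Riemann_integrable f a b, RiemannInt pr = I)) as [pr' <-].
  { exists (RiemannInt pr), pr. reflexivity. }
  symmetry. apply RInt_Reals.
Qed.

Lemma PI2_gt_0 : 0 < PI / 2.
Proof. pose proof PI_RGT_0. lra. Qed.

Lemma div_sqrt_add_sq_lipschitz (x a b : R) : 0 <= x ->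
  Rabs (x / sqrt (x + a ^ 2) - x / sqrt (x + b ^ 2)) <= Rabs (a - b).
Proof.
  intros Hx. destruct (Req_dec x 0) as [->|Hx0].
  { unfold Rdiv. rewrite !Rmult_0_l, Rminus_0_r, Rabs_R0. apply Rabs_pos. }
  set (A := sqrt (x + a ^ 2)). set (B := sqrt (x + b ^ 2)).
  assert (HA : 0 < A) by (apply sqrt_lt_R0; nra).
  assert (HB : 0 < B) by (apply sqrt_lt_R0; nra).
  assert (HA2 : A * A = x + a ^ 2) by (apply sqrt_sqrt; nra).
  assert (HB2 : B * B = x + b ^ 2) by (apply sqrt_sqrt; nra).
  assert (HaA : Rabs a <= A).
  { rewrite <- sqrt_Rsqr_abs. apply sqrt_le_1_alt. unfold Rsqr. nra. }
  assert (HbB : Rabs b <= B).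
  { rewrite <- sqrt_Rsqr_abs. apply sqrt_le_1_alt. unfold Rsqr. nra. }
  assert (HxAB : x <= A * B).
  { assert (sqrt x <= A) by (apply sqrt_le_1_alt; nra).
    assert (sqrt x <= B) by (apply sqrt_le_1_alt; nra).
    assert (sqrt x * sqrt x = x) by (apply sqrt_sqrt; lra).
    pose proof (sqrt_pos x). nra. }
  replace (x / A - x / B) with (x / (A * B) * ((b - a) * (b + a) / (A + B)))
    by (replace ((b - a) * (b + a)) with (B * B - A * A) by nra; field; lra).
  assert (Hfst : Rabs (x / (A * B)) <= 1).
  { rewrite Rabs_pos_eq by (apply Rdiv_le_0_compat; nra).
    apply (Rcomplements.Rdiv_le_1 x (A * B)); [nra | exact HxAB]. }
  assert (Hsnd : Rabs ((b - a) * (b + a) / (A + B)) <= Rabs (a - b)).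
  { unfold Rdiv. rewrite !Rabs_mult, (Rabs_pos_eq (/ (A + B)))
      by (left; apply Rinv_0_lt_compat; lra).
    rewrite (Rabs_minus_sym b a).
    assert (Rabs (b + a) * / (A + B) <= 1).
    { apply (Rcomplements.Rdiv_le_1 (Rabs (b + a)) (A + B)); [lra |].
      pose proof (Rabs_triang b a). lra. }
    pose proof (Rabs_pos (a - b)). pose proof (Rabs_pos (b + a)). nra. }
  rewrite Rabs_mult.
  pose proof (Rabs_pos (x / (A * B))). pose proof (Rabs_pos (a - b)). nra.
Qed.

Lemma tangent_sqrt_sub_sqrt (u c : R) : 0 <= u -> 0 < c ->
  (u + c ^ 2) / (2 * c) - sqrt u = (sqrt u - c) ^ 2 / (2 * c).
Proof.
  intros Hu Hc. assert (sqrt u * sqrt u = u) by (apply sqrt_sqrt; lra).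
  field_simplify; [|lra|lra]. f_equal. nra.
Qed.

Definition phi1_integrand (s t : R) : R := sin t ^ 2 / sqrt (sin t ^ 2 + s ^ 2).

Definition sqrt_sin2_add (s t : R) : R := sqrt (sin t ^ 2 + s ^ 2).

Lemma phi1_integrand_0 (t : R) : 0 <= sin t -> phi1_integrand 0 t = sin t.
Proof.
  intros Ht. unfold phi1_integrand.
  replace (sin t ^ 2 + 0 ^ 2) with (sin t ^ 2) by ring.
  rewrite sqrt_pow2 by exact Ht.
  destruct (Req_dec (sin t) 0) as [->|Hne]; [unfold Rdiv; ring | field; exact Hne].
Qed.

Lemma phi1_integrand_0_on (t : R) :
  Rmin 0 (PI / 2) <= t <= Rmax 0 (PI / 2) -> phi1_integrand 0 t = sin t.
Proof.
  pose proof PI2_gt_0. rewrite Rmin_left, Rmax_right by lra. intros Ht.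
  apply phi1_integrand_0, sin_ge_0; lra.
Qed.

Lemma continuous_phi1_integrand (s t : R) : s <> 0 -> continuous (phi1_integrand s) t.
Proof.
  intros Hs. apply (@ex_derive_continuous R_AbsRing R_NormedModule).
  unfold phi1_integrand. assert (0 < sin t ^ 2 + s ^ 2) by nra.
  auto_derive. split; [lra | split; [|exact I]].
  apply Rgt_not_eq, sqrt_lt_R0. lra.
Qed.

Lemma continuous_sqrt_sin2_add (s t : R) : s <> 0 -> continuous (sqrt_sin2_add s) t.
Proof.
  intros Hs. apply (@ex_derive_continuous R_AbsRing R_NormedModule).
  unfold sqrt_sin2_add. assert (0 < sin t ^ 2 + s ^ 2) by nra.
  auto_derive. lra.
Qed.

Lemma ex_RInt_phi1_integrand (s : R) : ex_RInt (phi1_integrand s) 0 (PI / 2).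
Proof.
  destruct (Req_dec s 0) as [->|Hs].
  - apply ex_RInt_ext with sin.
    { intros t Ht. symmetry. apply phi1_integrand_0_on. split; lra. }
    apply (ex_RInt_continuous (V := R_CompleteNormedModule)).
    intros z _. apply continuous_sin.
  - apply (ex_RInt_continuous (V := R_CompleteNormedModule)).
    intros z _. now apply continuous_phi1_integrand.
Qed.

Lemma ex_RInt_sqrt_sin2_add (s a b : R) : s <> 0 -> ex_RInt (sqrt_sin2_add s) a b.
Proof.
  intros Hs. apply (ex_RInt_continuous (V := R_CompleteNormedModule)).
  intros z _. now apply continuous_sqrt_sin2_add.
Qed.

Lemma phi1_RInt (s : R) : phi1 s = RInt (phi1_integrand s) 0 (PI / 2).
Proof. apply Defs_RInt_eq_RInt, ex_RInt_phi1_integrand. Qed.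

Lemma phi2_RInt (s : R) : s <> 0 ->
  phi2 s = phi1 s + RInt (sqrt_sin2_add s) 0 (PI / 2).
Proof.
  intros Hs.
  assert (Hsum : forall t, phi1_integrand s t + sqrt_sin2_add s t
          = (2 * sin t ^ 2 + s ^ 2) / sqrt (sin t ^ 2 + s ^ 2)).
  { intros t. unfold phi1_integrand, sqrt_sin2_add.
    assert (0 < sin t ^ 2 + s ^ 2) by nra.
    set (u := sqrt (sin t ^ 2 + s ^ 2)).
    assert (0 < u) by (apply sqrt_lt_R0; lra).
    assert (Hu : u * u = sin t ^ 2 + s ^ 2) by (apply sqrt_sqrt; lra).
    replace (2 * sin t ^ 2 + s ^ 2) with (sin t ^ 2 + u * u) by lra.
    field. lra. }
  pose proof (ex_RInt_phi1_integrand s) as H1.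
  pose proof (ex_RInt_sqrt_sin2_add s 0 (PI / 2) Hs) as H2.
  assert (Hex := ex_RInt_plus (V := R_CompleteNormedModule) _ _ _ _ H1 H2).
  unfold phi2. rewrite Defs_RInt_eq_RInt.
  2: { apply ex_RInt_ext with (2 := Hex). intros t _. apply Hsum. }
  rewrite phi1_RInt, <- (RInt_ext (fun t => phi1_integrand s t + sqrt_sin2_add s t))
    by (intros; apply Hsum).
  exact (RInt_plus (V := R_CompleteNormedModule) _ _ _ _ H1 H2).
Qed.

Lemma phi1_0 : phi1 0 = 1.
Proof.
  rewrite phi1_RInt, (RInt_ext _ sin) by (intros t Ht; apply phi1_integrand_0_on; lra).
  rewrite (is_RInt_unique sin 0 (PI / 2) (minus (- cos (PI / 2)) (- cos 0))).
  - rewrite cos_PI2, cos_0. unfold minus, plus, opp. simpl. ring.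
  - apply (is_RInt_derive (fun x => - cos x)).
    + intros x _. auto_derive; [exact I | ring].
    + intros x _. apply continuous_sin.
Qed.

Lemma phi1_lipschitz (a b : R) : Rabs (phi1 a - phi1 b) <= PI / 2 * Rabs (a - b).
Proof.
  pose proof PI2_gt_0.
  pose proof (ex_RInt_phi1_integrand a) as Ha.
  pose proof (ex_RInt_phi1_integrand b) as Hb.
  assert (Hab := ex_RInt_minus (V := R_CompleteNormedModule) _ _ _ _ Ha Hb).
  rewrite !phi1_RInt.
  change (RInt (phi1_integrand a) 0 (PI / 2) - RInt (phi1_integrand b) 0 (PI / 2))
    with (minus (RInt (phi1_integrand a) 0 (PI / 2)) (RInt (phi1_integrand b) 0 (PI / 2))).
  rewrite <- (RInt_minus (V := R_CompleteNormedModule)) by assumption.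
  eapply Rle_trans; [apply abs_RInt_le; [lra | exact Hab] |].
  eapply Rle_trans.
  - apply (RInt_le _ (fun _ => Rabs (a - b))); [lra | | apply ex_RInt_const |].
    + exact (ex_RInt_norm _ _ _ Hab).
    + intros t _. apply div_sqrt_add_sq_lipschitz, pow2_ge_0.
  - rewrite RInt_const. unfold scal; simpl; unfold mult; simpl. lra.
Qed.

Lemma continuity_phi1 : continuity phi1.
Proof.
  intros x0 eps Heps. pose proof PI_RGT_0.
  exists (eps / PI). split; [apply Rdiv_lt_0_compat; lra |].
  intros x [_ Hx]. simpl in *. unfold R_dist in *.
  eapply Rle_lt_trans; [apply phi1_lipschitz |].
  apply Rmult_lt_compat_l with (r := PI / 2) in Hx; [| lra].
  replace (PI / 2 * (eps / PI)) with (eps / 2) in Hx by (field; lra). lra.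
Qed.

Lemma phi1_le_inv (s : R) : 0 < s -> phi1 s <= PI / 2 / s.
Proof.
  intros Hs. pose proof PI2_gt_0. rewrite phi1_RInt.
  eapply Rle_trans.
  - apply (RInt_le _ (fun _ => 1 / s)); [lra | apply ex_RInt_phi1_integrand
                                        | apply ex_RInt_const |].
    intros t _. unfold phi1_integrand.
    assert (Hsin : 0 <= sin t ^ 2 <= 1) by (pose proof (SIN_bound t); nra).
    assert (Hsq : s <= sqrt (sin t ^ 2 + s ^ 2)).
    { rewrite <- (sqrt_pow2 s) at 1 by lra. apply sqrt_le_1_alt. lra. }
    apply Rmult_le_reg_r with (sqrt (sin t ^ 2 + s ^ 2)); [lra |].
    unfold Rdiv. rewrite Rmult_assoc, Rinv_l by lra.
    assert (s * / s = 1) by (field; lra).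
    assert (0 < / s) by (apply Rinv_0_lt_compat; lra). nra.
  - rewrite RInt_const. unfold scal; simpl; unfold mult; simpl. right. field. lra.
Qed.

Lemma phi1_inv_spec (alpha : R) : 0 < alpha < 1 ->
  0 < phi1_inv alpha /\ phi1 (phi1_inv alpha) = alpha.
Proof.
  intros Ha. pose proof PI_RGT_0.
  assert (Hex : exists s, 0 <= s /\ phi1 s = alpha).
  { assert (Hup := phi1_le_inv (PI / alpha) ltac:(apply Rdiv_lt_0_compat; lra)).
    replace (PI / 2 / (PI / alpha)) with (alpha / 2) in Hup by (field; lra).
    destruct (IVT (fun s => alpha - phi1 s) 0 (PI / alpha)) as [z [Hz Ez]].
    - apply continuity_minus; [apply continuity_const; intros ? ?; reflexivity
                              | apply continuity_phi1].
    - apply Rdiv_lt_0_compat; lra.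
    - rewrite phi1_0. lra.
    - lra.
    - exists z. lra. }
  destruct (epsilon_spec (inhabits 0) (fun s => 0 <= s /\ phi1 s = alpha) Hex)
    as [[Hpos | Hzero] Hphi]; fold (phi1_inv alpha) in *.
  - auto.
  - rewrite <- Hzero, phi1_0 in Hphi. lra.
Qed.

Section TangentBound.

Variable s : R.
Hypothesis Hs : s <> 0.

Let c := sqrt (1 / 2 + s ^ 2).

Let c_gt_0 : 0 < c.
Proof. apply sqrt_lt_R0. nra. Qed.

Definition tangent_sqrt_sin2_add (t : R) : R := (sin t ^ 2 + s ^ 2 + c ^ 2) / (2 * c).

Lemma continuous_tangent_sqrt_sin2_add (t : R) : continuous tangent_sqrt_sin2_add t.
Proof.
  apply (@ex_derive_continuous R_AbsRing R_NormedModule).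
  unfold tangent_sqrt_sin2_add. pose proof c_gt_0. auto_derive. lra.
Qed.

Lemma RInt_tangent_sqrt_sin2_add : RInt tangent_sqrt_sin2_add 0 (PI / 2) = c * PI / 2.
Proof.
  assert (Hc : c * c = 1 / 2 + s ^ 2) by (apply sqrt_sqrt; nra).
  pose proof c_gt_0.
  set (P t := ((t - sin t * cos t) / 2 + (s ^ 2 + c ^ 2) * t) / (2 * c)).
  rewrite (is_RInt_unique _ 0 (PI / 2) (P (PI / 2) - P 0)).
  - unfold P. rewrite sin_PI2, cos_PI2, sin_0, cos_0.
    replace (s ^ 2) with (c * c - 1 / 2) by lra. simpl. field. lra.
  - apply (is_RInt_derive P).
    + intros x _. unfold P. auto_derive; [exact I |]. unfold tangent_sqrt_sin2_add.
      pose proof (sin2_cos2 x) as Hsc. unfold Rsqr in Hsc.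
      replace (1 * cos x * cos x) with (1 - sin x * sin x) by lra. field. lra.
    + intros x _. apply continuous_tangent_sqrt_sin2_add.
Qed.

Lemma RInt_sqrt_sin2_add_lt : RInt (sqrt_sin2_add s) 0 (PI / 2) < c * PI / 2.
Proof.
  pose proof PI_RGT_0. pose proof c_gt_0.
  set (gap t := tangent_sqrt_sin2_add t - sqrt_sin2_add s t).
  assert (Hgap : forall t, gap t = (sqrt_sin2_add s t - c) ^ 2 / (2 * c)).
  { intros t. apply tangent_sqrt_sub_sqrt; [nra | lra]. }
  assert (Hcont : forall t, continuous gap t).
  { intros t. apply (continuous_minus (V := R_NormedModule));
      [apply continuous_tangent_sqrt_sin2_add | now apply continuous_sqrt_sin2_add]. }
  assert (Hex : forall a b, ex_RInt gap a b)
    by (intros; apply (ex_RInt_continuous (V := R_CompleteNormedModule)); auto).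
  (* the gap vanishes only where sin^2 t = 1/2, i.e. at t = pi/4 *)
  assert (Hfirst : 0 < RInt gap 0 (PI / 4)).
  { apply RInt_gt_0; [lra | | auto]. intros t Ht. rewrite Hgap.
    assert (Hcos : 0 < cos (2 * t)) by (apply cos_gt_0; lra).
    rewrite cos_2a_sin in Hcos.
    assert (sqrt_sin2_add s t < c) by (apply sqrt_lt_1_alt; nra).
    apply Rdiv_lt_0_compat; nra. }
  assert (Hsecond : 0 <= RInt gap (PI / 4) (PI / 2)).
  { apply RInt_ge_0; [lra | auto |]. intros t _. rewrite Hgap.
    apply Rdiv_le_0_compat; [apply pow2_ge_0 | lra]. }
  assert (Hint : 0 < RInt gap 0 (PI / 2)).
  { rewrite <- (RInt_Chasles (V := R_CompleteNormedModule) _ 0 (PI / 4) (PI / 2))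
      by auto. simpl. unfold plus; simpl. lra. }
  unfold gap in Hint.
  rewrite (RInt_minus (V := R_CompleteNormedModule) tangent_sqrt_sin2_add) in Hint.
  - rewrite RInt_tangent_sqrt_sin2_add in Hint. unfold minus, plus, opp in Hint.
    simpl in Hint. lra.
  - apply (ex_RInt_continuous (V := R_CompleteNormedModule)). intros t _.
    apply continuous_tangent_sqrt_sin2_add.
  - now apply ex_RInt_sqrt_sin2_add.
Qed.

End TangentBound.

Lemma sq_add_div_lt (a J s : R) : 0 <= J -> J < sqrt (1 / 2 + s ^ 2) * PI / 2 ->
  (a + J) ^ 2 / (4 * (1 + s ^ 2)) < PI ^ 2 / 16 + 1 / 2 * a ^ 2.
Proof.
  intros HJ0 HJ.
  set (c := sqrt (1 / 2 + s ^ 2)) in HJ.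
  assert (Hc : c * c = 1 / 2 + s ^ 2) by (apply sqrt_sqrt; nra).
  assert (HJ2 : J ^ 2 < (1 + 2 * s ^ 2) * PI ^ 2 / 8) by nra.
  set (k := 1 + 2 * s ^ 2) in HJ2.
  assert (Hk : 0 < k) by (unfold k; nra).
  assert (Hcs : k * (a + J) ^ 2 <= (1 + k) * (k * a ^ 2 + J ^ 2))
    by (pose proof (pow2_ge_0 (a * k - J)); nra).
  assert (Hsq : (a + J) ^ 2 < (1 + k) * (a ^ 2 + PI ^ 2 / 8)).
  { apply Rmult_lt_reg_l with k; [exact Hk |].
    assert ((1 + k) * J ^ 2 < (1 + k) * (k * PI ^ 2 / 8)) by (apply Rmult_lt_compat_l; lra).
    nra. }
  apply Rmult_lt_reg_r with (4 * (1 + s ^ 2)); [nra |].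
  unfold Rdiv at 1. rewrite Rmult_assoc, Rinv_l by nra. unfold k in Hsq. nra.
Qed.

Theorem mainTheorem16 (alpha delta : R) :
  0 < alpha < 1 -> 0 < delta ->
  L alpha delta > 4 / delta * (1 - PI ^ 2 / 16 - 1 / 2 * alpha ^ 2).
Proof.
  intros Ha Hd. unfold L. cbv zeta.
  destruct (phi1_inv_spec alpha Ha) as [Hs Hphi1].
  set (s := phi1_inv alpha) in *.
  rewrite (phi2_RInt s) by lra. rewrite Hphi1.
  assert (HJ0 : 0 <= RInt (sqrt_sin2_add s) 0 (PI / 2)).
  { apply RInt_ge_0; [pose proof PI2_gt_0; lra | apply ex_RInt_sqrt_sin2_add; lra |].
    intros; apply sqrt_pos. }
  pose proof (sq_add_div_lt alpha _ s HJ0 (RInt_sqrt_sin2_add_lt s ltac:(lra))).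
  apply Rmult_gt_compat_l; [apply Rdiv_lt_0_compat; lra | lra].
Qed.
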